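(* Assume $\widetilde{\epsilon}>0$. For $\zeta\in[a,\tau]$ define $$\widetilde{M_2}(\zeta)=\frac{1-\tau_2}{\epsilon-\widetilde{\epsilon}}\,\frac{1-e^{-r(\omega-\tau)}}{ra_\tau}\left(e^{\epsilon(\tau-\zeta)}-e^{\widetilde{\epsilon}(\tau-\zeta)}\right)-\frac{1-\tau_1}{\epsilon}\left(e^{\epsilon(\tau-\zeta)}-1\right),$$ so that $\widetilde{M_2}(\tau)=0$ and $\widetilde{M_2}'(\tau)=1-\tau_1-\frac{1-\tau_2}{ra_\tau}\left(1-e^{-r(\omega-\tau)}\right)$. Then: (i) If $\widetilde{M_2}(a)\ge0$ and $\widetilde{M_2}'(\tau)>0$, there exists a critical age $\bar{\zeta}\in[a,\tau)$ such that $\widetilde{M_2}(\zeta)>0$ for $a\le\zeta<\bar{\zeta}$, $\widetilde{M_2}(\bar{\zeta})=0$, and $\widetilde{M_2}(\zeta)<0$ for $\bar{\zeta}<\zeta<\tau$ (younger participants prefer EET to individual savings, older ones prefer individual savings). (ii) If $\widetilde{M_2}(a)<0$, then $\widetilde{M_2}(\zeta)<0$ for all $\zeta\in[a,\tau)$ (all prefer individual savings to EET). (iii) If $\widetilde{M_2}'(\tau)\le0$, then $\widetilde{M_2}(\zeta)>0$ for all $\zeta\in[a,\tau)$ (all prefer EET to individual savings).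
   Context: Parameters: $r>0$, $\mu>r$, $\sigma>0$, real $\gamma,\xi,\alpha,\beta$; $\nu=(\mu-r)/\sigma$, $\epsilon=\gamma-r-\xi\nu\neq0$, $\widetilde{\epsilon}=\alpha-r-\beta\nu\neq\epsilon$. Ages $a<\tau<\omega$; tax rates $\tau_1,\tau_2\in[0,1)$. With survival function $s(x)=e^{-A_m(x-a)-\frac{B_m}{\ln c}(c^x-c^a)}$ (Makeham constants $A_m,B_m,c$), $a_\tau=\int_0^\infty e^{-(r+A_m)t-\frac{B_m}{\ln c}c^\tau(c^t-1)}dt\in(0,\infty)$ is the annuity factor. Interpretation: $\zeta$ is a participant's age at the decision time, and the sign of $\widetilde{M_2}(\zeta)$ is the sign of the effect of raising the EET contribution rate $k$ (relative to individual savings) on that participant's value function. *)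

From Stdlib Require Import Reals Lra.
From Coquelicot Require Import Coquelicot.
Open Scope R_scope.

Definition nu (mu r sigma : R) : R := (mu - r) / sigma.

Definition eps (gamma r xi mu sigma : R) : R := gamma - r - xi * nu mu r sigma.

Definition eps_t (alpha r beta mu sigma : R) : R := alpha - r - beta * nu mu r sigma.

(* Integrand of the annuity factor under Makeham's law *)
Definition annuity_integrand (r Am Bm c tau : R) (t : R) : R :=
  exp (- (r + Am) * t - Bm / ln c * Rpower c tau * (Rpower c t - 1)).

Definition annuity (r Am Bm c tau : R) : R :=
  RInt_gen (annuity_integrand r Am Bm c tau) (at_point 0) (Rbar_locally p_infty).

Definition M2t (r tau omega tau1 tau2 e et atau : R) (zeta : R) : R :=
  (1 - tau2) / (e - et) * ((1 - exp (- r * (omega - tau))) / (r * atau))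
    * (exp (e * (tau - zeta)) - exp (et * (tau - zeta)))
  - (1 - tau1) / e * (exp (e * (tau - zeta)) - 1).

Definition M2t'_tau (r tau omega tau1 tau2 atau : R) : R :=
  1 - tau1 - (1 - tau2) / (r * atau) * (1 - exp (- r * (omega - tau))).

(** Put [x = tau - zeta], the time left until retirement, so that [M2t] becomes
    [f x = A (e^(eps x) - e^(eps~ x)) - B (e^(eps x) - 1)] with [f 0 = 0].  Its
    derivative is [e^(eps x) g x] where [g x = A (eps - eps~ e^((eps~ - eps) x)) - B eps]
    is strictly increasing, because [A (eps - eps~) > 0] and [eps~ > 0].  Hence [f]
    decreases and then increases: once [f x >= 0] at some [x > 0], [f] stays positive
    beyond [x].  The three cases are decided by the sign of [f] at [x = tau - a] and of
    [g 0 = - M2t'(tau)]. *)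

From Stdlib Require Import Reals Lra.
From Coquelicot Require Import Coquelicot.
Open Scope R_scope.

Lemma derivable_pt_lim_neg_descends (f : R -> R) (x l X : R) :
  derivable_pt_lim f x l -> l < 0 -> 0 < X ->
  exists h, 0 < h <= X /\ f (x + h) < f x.
Proof.
  intros Hf Hl HX.
  destruct (Hf (- l / 2) ltac:(lra)) as [[delta Hdelta] Hquot].
  set (h := Rmin (delta / 2) X).
  assert (Hh_delta : h <= delta / 2) by apply Rmin_l.
  assert (Hh_X : h <= X) by apply Rmin_r.
  assert (Hh_pos : 0 < h) by (apply Rmin_glb_lt; lra).
  exists h; split; [lra |].
  assert (Hclose := Hquot h ltac:(lra) ltac:(rewrite Rabs_right; simpl; lra)).
  apply Rabs_def2 in Hclose as [Hbelow _].
  assert (Hslope : (f (x + h) - f x) / h < 0) by lra.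
  assert (Hdiff : f (x + h) - f x = (f (x + h) - f x) / h * h) by (field; lra).
  nra.
Qed.

Section SingleCrossing.

Variables f w g : R -> R.
Hypothesis f_derive : forall x, derivable_pt_lim f x (w x * g x).
Hypothesis w_pos : forall x, 0 < w x.
Hypothesis g_increasing : forall x y, x < y -> g x < g y.
Hypothesis f_0 : f 0 = 0.

Lemma single_crossing_pos (x y : R) : 0 < x -> x < y -> 0 <= f x -> 0 < f y.
Proof.
  intros Hx Hxy Hfx.
  destruct (MVT_cor2 f (fun t => w t * g t) 0 x Hx (fun t _ => f_derive t))
    as [c [Hc Hc_in]].
  rewrite f_0, !Rminus_0_r in Hc.
  assert (Hgc : 0 <= g c).
  { destruct (Rle_or_lt 0 (g c)) as [| Hneg]; [assumption |].
    assert (0 < w c * - g c) by (apply Rmult_lt_0_compat; [apply w_pos | lra]).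
    nra. }
  destruct (MVT_cor2 f (fun t => w t * g t) x y Hxy (fun t _ => f_derive t))
    as [d [Hd Hd_in]].
  assert (Hgd : 0 < g d) by (apply Rle_lt_trans with (g c); auto; apply g_increasing; lra).
  assert (0 < w d * g d) by (apply Rmult_lt_0_compat; [apply w_pos | assumption]).
  nra.
Qed.

Lemma single_crossing_neg (x y : R) : 0 < x -> x < y -> f y <= 0 -> f x < 0.
Proof.
  intros Hx Hxy Hfy.
  destruct (Rlt_or_le (f x) 0) as [| Hfx]; [assumption |].
  pose proof (single_crossing_pos x y Hx Hxy Hfx). lra.
Qed.

Lemma pos_of_g0_nonneg (x : R) : 0 <= g 0 -> 0 < x -> 0 < f x.
Proof.
  intros Hg0 Hx.
  destruct (MVT_cor2 f (fun t => w t * g t) 0 x Hx (fun t _ => f_derive t))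
    as [c [Hc Hc_in]].
  rewrite f_0, !Rminus_0_r in Hc.
  assert (0 < g c) by (apply Rle_lt_trans with (g 0); auto; apply g_increasing; lra).
  assert (0 < w c * g c) by (apply Rmult_lt_0_compat; [apply w_pos | assumption]).
  nra.
Qed.

Lemma root_of_g0_neg (X : R) : g 0 < 0 -> 0 < X -> 0 <= f X ->
  exists x0, 0 < x0 <= X /\ f x0 = 0.
Proof.
  intros Hg0 HX HfX.
  assert (Hdescent : w 0 * g 0 < 0) by (pose proof (w_pos 0); nra).
  destruct (derivable_pt_lim_neg_descends f 0 _ X (f_derive 0) Hdescent HX)
    as [h [Hh Hfh]].
  rewrite Rplus_0_l, f_0 in Hfh.
  assert (Hcont : continuity f).
  { intro x. apply derivable_continuous_pt. exists (w x * g x). apply f_derive. }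
  destruct (IVT_cor f h X Hcont ltac:(lra) ltac:(nra)) as [x0 [Hx0 Hfx0]].
  exists x0. split; [lra | assumption].
Qed.

End SingleCrossing.

Definition M2_rem (A B e et x : R) : R :=
  A * (exp (e * x) - exp (et * x)) - B * (exp (e * x) - 1).

Definition M2_rem_slope (A B e et x : R) : R :=
  A * (e - et * exp ((et - e) * x)) - B * e.

Lemma M2_rem_0 (A B e et : R) : M2_rem A B e et 0 = 0.
Proof. unfold M2_rem. rewrite !Rmult_0_r, exp_0. ring. Qed.

Lemma M2_rem_derive (A B e et x : R) :
  derivable_pt_lim (M2_rem A B e et) x (exp (e * x) * M2_rem_slope A B e et x).
Proof.
  apply is_derive_Reals. unfold M2_rem, M2_rem_slope.
  auto_derive; [easy |].
  replace (exp (et * x)) with (exp (e * x) * exp ((et - e) * x))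
    by (rewrite <- exp_plus; f_equal; ring).
  ring.
Qed.

Lemma M2_rem_slope_increasing (A B e et x y : R) :
  0 < A * (e - et) -> 0 < et -> x < y ->
  M2_rem_slope A B e et x < M2_rem_slope A B e et y.
Proof.
  intros HA Het Hxy.
  apply (incr_function_le _ m_infty p_infty
           (fun t => A * (e - et) * et * exp ((et - e) * t))); try easy.
  - intros t _ _. unfold M2_rem_slope. auto_derive; [easy | ring].
  - intros t _ _. apply Rlt_gt.
    apply Rmult_lt_0_compat; [apply Rmult_lt_0_compat; assumption | apply exp_pos].
Qed.

Theorem theorem3p3
  (r mu sigma gamma xi alpha beta Am Bm c a tau omega tau1 tau2 : R)
  (Hr : 0 < r) (Hmu : r < mu) (Hsigma : 0 < sigma)
  (Heps : eps gamma r xi mu sigma <> 0)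
  (Heps_t : eps_t alpha r beta mu sigma <> eps gamma r xi mu sigma)
  (Hages : a < tau < omega)
  (Htau1 : 0 <= tau1 < 1) (Htau2 : 0 <= tau2 < 1)
  (Hc : 0 < c) (Hc1 : c <> 1)
  (Hconv : ex_RInt_gen (annuity_integrand r Am Bm c tau) (at_point 0) (Rbar_locally p_infty))
  (Hapos : 0 < annuity r Am Bm c tau)
  (Hepst_pos : 0 < eps_t alpha r beta mu sigma) :
  let e := eps gamma r xi mu sigma in
  let et := eps_t alpha r beta mu sigma in
  let atau := annuity r Am Bm c tau in
  let M := M2t r tau omega tau1 tau2 e et atau in
  let M'tau := M2t'_tau r tau omega tau1 tau2 atau in
  (* (i) *)
  ((0 <= M a -> 0 < M'tau ->
     exists zb, a <= zb < tau /\
       (forall z, a <= z < zb -> 0 < M z) /\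
       M zb = 0 /\
       (forall z, zb < z < tau -> M z < 0))
  (* (ii) *)
  /\ (M a < 0 -> forall z, a <= z < tau -> M z < 0)
  (* (iii) *)
  /\ (M'tau <= 0 -> forall z, a <= z < tau -> 0 < M z)).
Proof.
  intros e et atau M M'tau.
  set (Q := (1 - exp (- r * (omega - tau))) / (r * atau)).
  set (A := (1 - tau2) / (e - et) * Q).
  set (B := (1 - tau1) / e).
  assert (HM : forall z, M z = M2_rem A B e et (tau - z)) by reflexivity.
  assert (Hee : e - et <> 0) by (unfold e, et in *; lra).
  assert (HQ : 0 < Q).
  { assert (exp (- r * (omega - tau)) < 1) by (rewrite <- exp_0; apply exp_increasing; nra).
    apply Rdiv_lt_0_compat; [lra | apply Rmult_lt_0_compat; assumption]. }
  assert (HA : 0 < A * (e - et)).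
  { replace (A * (e - et)) with ((1 - tau2) * Q) by (unfold A; field; assumption).
    apply Rmult_lt_0_compat; lra. }
  assert (Hslope0 : M2_rem_slope A B e et 0 = - M'tau).
  { unfold M2_rem_slope, M'tau, M2t'_tau, A, B, Q. rewrite Rmult_0_r, exp_0.
    field. unfold atau; repeat split; try assumption; lra. }
  pose proof (M2_rem_derive A B e et) as Hder.
  pose proof (fun x y => M2_rem_slope_increasing A B e et x y HA Hepst_pos) as Hincr.
  pose proof (M2_rem_0 A B e et) as H0.
  pose proof (fun x => exp_pos (e * x)) as Hw.
  pose proof (single_crossing_pos _ _ _ Hder Hw Hincr H0) as Hpos.
  pose proof (single_crossing_neg _ _ _ Hder Hw Hincr H0) as Hneg.
  split; [| split].
  - intros Ha HM'. rewrite HM in Ha.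
    destruct (root_of_g0_neg _ _ _ Hder Hw H0 (tau - a)
                ltac:(lra) ltac:(lra) Ha) as [x0 [Hx0 Hroot]].
    exists (tau - x0). split; [lra | split; [| split]].
    + intros z Hz. rewrite HM. apply (Hpos x0); lra.
    + rewrite HM. replace (tau - (tau - x0)) with x0 by ring. assumption.
    + intros z Hz. rewrite HM. apply (Hneg _ x0); lra.
  - intros Ha z Hz. rewrite HM in Ha |- *.
    destruct (Req_dec z a) as [-> | Hza]; [assumption |].
    apply (Hneg _ (tau - a)); lra.
  - intros HM' z Hz. rewrite HM.
    apply (pos_of_g0_nonneg _ _ _ Hder Hw Hincr H0); lra.
Qed.
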